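(* Let $H,K$ be $n$-Hilbert spaces, fix $a_2,\dots,a_n\in H$, $b_2,\dots,b_n\in K$, $C_1\in\mathcal{GB}(H_F)$, $C_2\in\mathcal{GB}(K_G)$. Let $\{f_i\}_{i=1}^\infty,\{e_i\}_{i=1}^\infty$ be a pair of dual $C_1$-controlled frames associated to $(a_2,\dots,a_n)$ for $H$ and $\{g_j\}_{j=1}^\infty,\{h_j\}_{j=1}^\infty$ a pair of dual $C_2$-controlled frames associated to $(b_2,\dots,b_n)$ for $K$. Then $\{e_i\otimes h_j\}_{i,j=1}^\infty$ is a dual $(C_1\otimes C_2)$-controlled frame associated to $(a_2\otimes b_2,\dots,a_n\otimes b_n)$ for $H\otimes K$ of $\{f_i\otimes g_j\}_{i,j=1}^\infty$.
   Context: Let $n\ge2$. For a complex $n$-Hilbert space $H$ with $n$-inner product $\langle\cdot,\cdot|\cdot,\dots,\cdot\rangle_1$ and $n$-norm $\|x_1,\dots,x_n\|_1=\langle x_1,x_1|x_2,\dots,x_n\rangle_1^{1/2}$, and fixed $a_2,\dots,a_n\in H$, $F=\{a_2,\dots,a_n\}$: $\langle x,y\rangle_F=\langle x,y|a_2,\dots,a_n\rangle_1$ is a semi-inner product on $H$ inducing an inner product on $H/L_F$ ($L_F=\mathrm{span}\,F$); identifying $H/L_F$ with an algebraic complement of $L_F$, $H_F$ is its Hilbert completion, with norm written $\|f,a_2,\dots,a_n\|_1$. Likewise $K$ with $\langle\cdot,\cdot|\cdot,\dots,\cdot\rangle_2$, $G=\{b_2,\dots,b_n\}$, Hilbert space $K_G$.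 $H\otimes K$ carries the $n$-inner product $\langle f_1\otimes g_1,f_2\otimes g_2|f_3\otimes g_3,\dots,f_n\otimes g_n\rangle=\langle f_1,f_2|f_3,\dots,f_n\rangle_1\langle g_1,g_2|g_3,\dots,g_n\rangle_2$ and $n$-norm $\|f_1\otimes g_1,\dots,f_n\otimes g_n\|=\|f_1,\dots,f_n\|_1\|g_1,\dots,g_n\|_2$; $H_F\otimes K_G$ is the Hilbert tensor product and $(Q\otimes T)(f\otimes g)=Qf\otimes Tg$. $\mathcal{GB}(\cdot)$: bounded operators with bounded inverse. For $C\in\mathcal{GB}(H_F)$, $\{f_i\}\subseteq H$ is a $C$-controlled frame associated to $(a_2,\dots,a_n)$ for $H$ if there are $0<A\le B<\infty$ with $A\|f,a_2,\dots,a_n\|_1^2\le\sum_i\langle f,f_i|a_2,\dots,a_n\rangle_1\langle Cf_i,f|a_2,\dots,a_n\rangle_1\le B\|f,a_2,\dots,a_n\|_1^2$ for all $f\in H_F$; a $C$-controlled frame $\{e_i\}$ associated to $(a_2,\dots,a_n)$ is a dual of $\{f_i\}$ (and they form a pair of dual $C$-controlled frames) if $f=\sum_i\langle f,e_i|a_2,\dots,a_n\rangle_1Cf_i$ for all $f\in H_F$ (similarly for $K$). A family $\{\phi_{ij}\}\subseteq H\otimes K$ is a $(C_1\otimes C_2)$-controlled frame associated to $(a_2\otimes b_2,\dots,a_n\otimes b_n)$ if there are $0<A\le B<\infty$ with $A\|f\otimes g,a_2\otimes b_2,\dots\|^2\le\sum_{i,j}\langle f\otimes g,\phi_{ij}|a_2\otimes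 b_2,\dots,a_n\otimes b_n\rangle\langle(C_1\otimes C_2)\phi_{ij},f\otimes g|a_2\otimes b_2,\dots,a_n\otimes b_n\rangle\le B\|f\otimes g,a_2\otimes b_2,\dots\|^2$ for all $f\in H_F$, $g\in K_G$. A $(C_1\otimes C_2)$-controlled frame $\{e_i\otimes h_j\}$ is a dual of the $(C_1\otimes C_2)$-controlled frame $\{f_i\otimes g_j\}$ if $f\otimes g=\sum_{i,j}\langle f\otimes g,e_i\otimes h_j|a_2\otimes b_2,\dots,a_n\otimes b_n\rangle(C_1\otimes C_2)(f_i\otimes g_j)$ for all $f\in H_F$, $g\in K_G$. *)

From HB Require Import structures.
From mathcomp Require Import all_boot all_order all_algebra.
From mathcomp Require Import all_classical all_reals all_analysis.
From mathcomp Require Export complex.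
Set Implicit Arguments. Unset Strict Implicit. Unset Printing Implicit Defensive.
Import Order.TTheory GRing.Theory Num.Theory.
Import numFieldNormedType.Exports.
Local Open Scope classical_set_scope.
Local Open Scope ring_scope.

(* Scalars: the complex numbers C = R[i] over a real field R : realType.
   Order on C is the usual partial order: x <= y iff y - x is real and >= 0. *)

Section Defs.
Variable R : realType.
Local Notation C := (R[i]).

(** The complex modulus |x|, as an element of R (|x| : R[i] is real). *)
Definition cmod (x : C) : R := complex.Re `|x|.

Definition cvgC (u : nat -> C) (l : C) : Prop :=
  (fun k => cmod (u k - l)) @ \oo --> (0 : R).

Definition series_to (u : nat -> C) (l : C) : Prop :=
  cvgC (fun N => \sum_(i < N) u i) l.

Definition dseries_to (u : nat -> nat -> C) (l : C) : Prop :=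
  exists s : nat -> C, (forall i, series_to (u i) (s i)) /\ series_to s l.

Definition lin_dep (V : lmodType C) (s : seq V) : Prop :=
  exists c : seq C, size c = size s /\ has (fun a => a != 0) c /\
    \sum_(i < size s) c`_i *: s`_i = 0.

(* An n-inner product  <x, y | z_2, ..., z_n>; the last n-1 arguments are
   given as a list z (of length n-1). *)
Definition is_n_inner_product (n : nat) (V : lmodType C)
    (nip : V -> V -> seq V -> C) : Prop :=
  [/\
      (forall x z, size z = n.-1 -> 0 <= nip x x z),
      (forall x z, size z = n.-1 -> (nip x x z = 0 <-> lin_dep (x :: z))),
      (forall x y z w, size z = n.-1 -> perm_eq (x :: z) (y :: w) ->
          nip x x z = nip y y w) /\
      (forall x y z, size z = n.-1 -> nip x y z = (nip y x z)^*%C),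
      (forall (a : C) x y z, size z = n.-1 -> nip (a *: x) y z = a * nip x y z) &
      (forall x x' y z, size z = n.-1 -> nip (x + x') y z = nip x y z + nip x' y z)].

Definition n_cauchy (n : nat) (V : lmodType C) (nip : V -> V -> seq V -> C)
    (x : nat -> V) : Prop :=
  forall z, size z = n.-1 -> forall e : R, 0 < e ->
    exists N, forall k l, (N <= k)%N -> (N <= l)%N ->
      cmod (nip (x k - x l) (x k - x l) z) < e.

Definition n_cvg (n : nat) (V : lmodType C) (nip : V -> V -> seq V -> C)
    (x : nat -> V) (l : V) : Prop :=
  forall z, size z = n.-1 -> cvgC (fun k => nip (x k - l) (x k - l) z) 0.

Definition is_n_Hilbert (n : nat) (V : lmodType C) (nip : V -> V -> seq V -> C) :
  Prop :=
  is_n_inner_product n nip /\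
  forall x : nat -> V, n_cauchy n nip x -> exists l, n_cvg n nip x l.

Definition is_inner_product (V : lmodType C) (ip : V -> V -> C) : Prop :=
  [/\ (forall (a : C) x y z, ip (a *: x + y) z = a * ip x z + ip y z),
      (forall x y, ip x y = (ip y x)^*%C),
      (forall x, 0 <= ip x x) &
      (forall x, ip x x = 0 -> x = 0)].

Definition cvgV (V : lmodType C) (ip : V -> V -> C) (x : nat -> V) (l : V) : Prop :=
  cvgC (fun k => ip (x k - l) (x k - l)) 0.

Definition cauchyV (V : lmodType C) (ip : V -> V -> C) (x : nat -> V) : Prop :=
  forall e : R, 0 < e -> exists N, forall k l, (N <= k)%N -> (N <= l)%N ->
    cmod (ip (x k - x l) (x k - x l)) < e.

Definition is_Hilbert (V : lmodType C) (ip : V -> V -> C) : Prop :=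
  is_inner_product ip /\
  forall x : nat -> V, cauchyV ip x -> exists l, cvgV ip x l.

Definition seriesV_to (V : lmodType C) (ip : V -> V -> C) (x : nat -> V) (l : V) :
  Prop := cvgV ip (fun N => \sum_(i < N) x i) l.

Definition dseriesV_to (V : lmodType C) (ip : V -> V -> C)
    (x : nat -> nat -> V) (l : V) : Prop :=
  exists s : nat -> V, (forall i, seriesV_to ip (x i) (s i)) /\ seriesV_to ip s l.

Definition is_linear_op (V W : lmodType C) (T : V -> W) : Prop :=
  forall (a : C) x y, T (a *: x + y) = a *: T x + T y.

Definition is_bounded_op (V : lmodType C) (ip : V -> V -> C) (T : V -> V) : Prop :=
  is_linear_op T /\ exists M : R, forall x, ip (T x) (T x) <= M%:C%C * ip x x.

Definition is_GB (V : lmodType C) (ip : V -> V -> C) (T : V -> V) : Prop :=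
  is_bounded_op ip T /\
  exists Ti : V -> V, cancel T Ti /\ cancel Ti T /\ is_bounded_op ip Ti.

(** H_F: the Hilbert space completion of (H / L_F, <.,.>_F), where
    <x,y>_F = <x,y|a_2,...,a_n>.  It is given (up to the canonical isometric
    isomorphism) by a Hilbert space HF together with the linear map
    iota : H -> HF (quotient map followed by the embedding into the completion),
    which preserves the semi-inner product and has dense range. *)
Definition is_completion_F (n : nat) (H : lmodType C) (nip : H -> H -> seq H -> C)
    (a : seq H) (HF : lmodType C) (ipF : HF -> HF -> C) (iota : H -> HF) : Prop :=
  [/\ is_Hilbert ipF, is_linear_op iota,
      (forall x y, ipF (iota x) (iota y) = nip x y a) &
      (forall u : HF, exists x : nat -> H, cvgV ipF (fun k => iota (x k)) u)].

Definition is_Hilbert_tensor (HF KG T : lmodType C) (ipF : HF -> HF -> C)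
    (ipG : KG -> KG -> C) (ipT : T -> T -> C) (tp : HF -> KG -> T) : Prop :=
  [/\ is_Hilbert ipT,
      (forall v, is_linear_op (tp^~ v)),
      (forall u, is_linear_op (tp u)),
      (forall u v u' v', ipT (tp u v) (tp u' v') = ipF u u' * ipG v v') &
      (forall t : T, exists s : nat -> seq (HF * KG),
          cvgV ipT (fun k => \sum_(p <- s k) tp p.1 p.2) t)].

Definition is_tensor_op (HF KG T : lmodType C) (ipT : T -> T -> C)
    (tp : HF -> KG -> T) (Q : HF -> HF) (Q' : KG -> KG) (QQ : T -> T) : Prop :=
  is_bounded_op ipT QQ /\ forall u v, QQ (tp u v) = tp (Q u) (Q' v).

(* {f_i} is a Cc-controlled frame associated to (a_2..a_n) for H; here
   <f, f_i | a_2..a_n> for f in H_F means ipF f (iota f_i). *)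
Definition controlled_frame (H HF : lmodType C) (ipF : HF -> HF -> C)
    (iota : H -> HF) (Cc : HF -> HF) (f : nat -> H) : Prop :=
  exists A B : R, 0 < A /\ A <= B /\
    forall u : HF, exists S : C,
      series_to (fun i => ipF u (iota (f i)) * ipF (Cc (iota (f i))) u) S /\
      A%:C%C * ipF u u <= S /\ S <= B%:C%C * ipF u u.

Definition dual_controlled_frames (H HF : lmodType C) (ipF : HF -> HF -> C)
    (iota : H -> HF) (Cc : HF -> HF) (f e : nat -> H) : Prop :=
  [/\ controlled_frame ipF iota Cc f, controlled_frame ipF iota Cc e &
      forall u : HF,
        seriesV_to ipF (fun i => ipF u (iota (e i)) *: Cc (iota (f i))) u].

(** A family phi_{ij} of H (x) K is
    represented by its image in the Hilbert tensor product T = H_F (x) K_G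
    (for phi_{ij} = x (x) y this is tp (iotaH x) (iotaK y)); then
    <f (x) g, phi_ij | a_2 (x) b_2, ...> = ipT (tp f g) phi_ij and
    ||f (x) g, a_2 (x) b_2, ...||^2 = ||f,a||^2 ||g,b||^2. *)
Definition tensor_controlled_frame (HF KG T : lmodType C) (ipF : HF -> HF -> C)
    (ipG : KG -> KG -> C) (ipT : T -> T -> C) (tp : HF -> KG -> T)
    (CC : T -> T) (phi : nat -> nat -> T) : Prop :=
  exists A B : R, 0 < A /\ A <= B /\
    forall (u : HF) (v : KG), exists S : C,
      dseries_to (fun i j => ipT (tp u v) (phi i j) * ipT (CC (phi i j)) (tp u v)) S /\
      A%:C%C * (ipF u u * ipG v v) <= S /\ S <= B%:C%C * (ipF u u * ipG v v).

Definition tensor_dual_frame (HF KG T : lmodType C) (ipF : HF -> HF -> C)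
    (ipG : KG -> KG -> C) (ipT : T -> T -> C) (tp : HF -> KG -> T)
    (CC : T -> T) (phi psi : nat -> nat -> T) : Prop :=
  [/\ tensor_controlled_frame ipF ipG ipT tp CC phi,
      tensor_controlled_frame ipF ipG ipT tp CC psi &
      forall (u : HF) (v : KG),
        dseriesV_to ipT (fun i j => ipT (tp u v) (psi i j) *: CC (phi i j)) (tp u v)].

End Defs.

From Pilot Require Import Defs.
From mathcomp Require Import all_boot all_order all_algebra.
From mathcomp Require Import all_classical all_reals all_analysis.
From mathcomp Require Import complex.
Set Implicit Arguments. Unset Strict Implicit. Unset Printing Implicit Defensive.
Import Order.TTheory GRing.Theory Num.Theory.
Local Open Scope ring_scope.

(* Everything factorizes on elementary tensors.  The controlled-frame sum of
   u (x) v against {f_i (x) g_j} is the product of the frame sums of u against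
   {f_i} and of v against {g_j}, so the frame bounds multiply.  The
   reconstruction series of u (x) v is the tensor product of the reconstruction
   series of u and of v, and x |-> x (x) v (resp. u (x) y) scales squared norms
   by a constant, so it carries convergent series to convergent series. *)

Section ComplexSeries.
Variable R : realType.

Lemma cmodM (c x : R[i]) : cmod (c * x) = cmod c * cmod x.
Proof.
rewrite /cmod normrM; have := normr_ge0 c; have := normr_ge0 x.
case: `|c| => a b; case: `|x| => a' b'; rewrite !lecE /=.
by move=> /andP[/eqP -> _] /andP[/eqP -> _] /=; rewrite !mulr0 subr0.
Qed.

Lemma cvgC_mull (c : R[i]) u l : cvgC u l -> cvgC (fun k => c * u k) (c * l).
Proof.
rewrite /cvgC => ul.
have -> : (fun k => cmod (c * u k - c * l)) = (fun k => cmod c * cmod (u k - l)).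
  by apply: funext => k; rewrite -mulrBr cmodM.
by rewrite -(mulr0 (cmod c)); apply: cvgMl_tmp.
Qed.

Lemma series_to_mull (c : R[i]) u l :
  series_to u l -> series_to (fun i => c * u i) (c * l).
Proof.
move=> ul; rewrite /series_to.
under eq_fun do rewrite -mulr_sumr.
exact: cvgC_mull.
Qed.

Lemma series_to_mulr (c : R[i]) u l :
  series_to u l -> series_to (fun i => u i * c) (l * c).
Proof. by move=> /(series_to_mull c); under eq_fun do rewrite mulrC; rewrite mulrC. Qed.

Lemma dseries_to_mul (u v : nat -> R[i]) (U V : R[i]) :
  series_to u U -> series_to v V -> dseries_to (fun i j => u i * v j) (U * V).
Proof.
move=> uU vV; exists (fun i => u i * V); split; last exact: series_to_mulr.
by move=> i; apply: series_to_mull.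
Qed.

End ComplexSeries.

Section LinearOp.
Variables (R : realType) (V W : lmodType R[i]) (L : V -> W).
Hypothesis linL : is_linear_op L.

Lemma linear_op0 : L 0 = 0.
Proof.
have := linL 1 0 0; rewrite !scale1r addr0 => L00.
by apply: (addrI (L 0)); rewrite addr0 -L00.
Qed.

Lemma linear_opD x y : L (x + y) = L x + L y.
Proof. by have := linL 1 x y; rewrite !scale1r. Qed.

Lemma linear_opZ a x : L (a *: x) = a *: L x.
Proof. by rewrite -[a *: x]addr0 linL linear_op0 addr0. Qed.

Lemma linear_opB x y : L (x - y) = L x - L y.
Proof. by rewrite linear_opD -scaleN1r linear_opZ scaleN1r. Qed.

Lemma linear_op_sum N (x : nat -> V) :
  L (\sum_(i < N) x i) = \sum_(i < N) L (x i).
Proof.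
elim: N => [|N IH]; first by rewrite !big_ord0 linear_op0.
by rewrite !big_ord_recr /= linear_opD IH.
Qed.

Section Similarity.
Variables (ipV : V -> V -> R[i]) (ipW : W -> W -> R[i]) (c : R[i]).
Hypothesis ipW_L : forall x, ipW (L x) (L x) = c * ipV x x.

Lemma cvgV_linear_op x l :
  Defs.cvgV ipV x l -> Defs.cvgV ipW (fun k => L (x k)) (L l).
Proof.
rewrite /Defs.cvgV => xl.
have -> : (fun k => ipW (L (x k) - L l) (L (x k) - L l)) =
          (fun k => c * ipV (x k - l) (x k - l)).
  by apply: funext => k; rewrite -linear_opB ipW_L.
by rewrite -(mulr0 c); apply: cvgC_mull.
Qed.

Lemma seriesV_to_linear_op x l :
  seriesV_to ipV x l -> seriesV_to ipW (fun i => L (x i)) (L l).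
Proof.
move=> /cvgV_linear_op; rewrite /seriesV_to.
suff -> : (fun N => \sum_(i < N) L (x i)) = (fun N => L (\sum_(i < N) x i)) by [].
by apply: funext => N; rewrite linear_op_sum.
Qed.

End Similarity.

End LinearOp.

Section HilbertTensor.
Variables (R : realType) (HF KG T : lmodType R[i]).
Variables (ipF : HF -> HF -> R[i]) (ipG : KG -> KG -> R[i]) (ipT : T -> T -> R[i]).
Variable tp : HF -> KG -> T.
Hypothesis tp_linl : forall v, is_linear_op (tp^~ v).
Hypothesis tp_linr : forall u, is_linear_op (tp u).
Hypothesis ipT_tp : forall u v u' v', ipT (tp u v) (tp u' v') = ipF u u' * ipG v v'.

Lemma dseriesV_to_tp (x : nat -> HF) (y : nat -> KG) u v :
    seriesV_to ipF x u -> seriesV_to ipG y v ->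
  dseriesV_to ipT (fun i j => tp (x i) (y j)) (tp u v).
Proof.
move=> xu yv; exists (fun i => tp (x i) v); split.
  by move=> i; apply: (seriesV_to_linear_op (tp_linr (x i)) _ yv) => y'; rewrite ipT_tp.
by apply: (seriesV_to_linear_op (tp_linl v) _ xu) => x'; rewrite ipT_tp mulrC.
Qed.

Variables (H K : lmodType R[i]) (iotaH : H -> HF) (iotaK : K -> KG).
Variables (C1 : HF -> HF) (C2 : KG -> KG) (C12 : T -> T).
Hypothesis C12_tp : forall u v, C12 (tp u v) = tp (C1 u) (C2 v).
Hypothesis ipF_ge0 : forall u, 0 <= ipF u u.
Hypothesis ipG_ge0 : forall v, 0 <= ipG v v.

Lemma tensor_controlled_frame_tp (f : nat -> H) (g : nat -> K) :
    controlled_frame ipF iotaH C1 f -> controlled_frame ipG iotaK C2 g ->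
  tensor_controlled_frame ipF ipG ipT tp C12
    (fun i j => tp (iotaH (f i)) (iotaK (g j))).
Proof.
move=> [A1 [B1 [A1_gt0 [A1B1 frame_f]]]] [A2 [B2 [A2_gt0 [A2B2 frame_g]]]].
exists (A1 * A2), (B1 * B2); split; first exact: mulr_gt0.
split; first by apply: ler_pM => //; apply: ltW.
move=> u v.
have [S1 [sum_f [lb_f ub_f]]] := frame_f u.
have [S2 [sum_g [lb_g ub_g]]] := frame_g v.
have lb_f_ge0 : 0 <= A1%:C%C * ipF u u by rewrite mulr_ge0 // ler0c ltW.
have lb_g_ge0 : 0 <= A2%:C%C * ipG v v by rewrite mulr_ge0 // ler0c ltW.
exists (S1 * S2); split.
  under eq_fun do under eq_fun do rewrite C12_tp !ipT_tp mulrACA.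
  exact: dseries_to_mul.
rewrite !rmorphM; split; rewrite mulrACA; apply: ler_pM => //.
- exact: le_trans lb_f_ge0 lb_f.
- exact: le_trans lb_g_ge0 lb_g.
Qed.

End HilbertTensor.

Theorem theorem4p11 (R : realType) (n : nat) (hn : (2 <= n)%N)
  (H K : lmodType R[i])
  (nip1 : H -> H -> seq H -> R[i]) (nip2 : K -> K -> seq K -> R[i])
  (hH : is_n_Hilbert n nip1) (hK : is_n_Hilbert n nip2)
  (a : seq H) (b : seq K) (ha : size a = n.-1) (hb : size b = n.-1)
  (HF : lmodType R[i]) (ipF : HF -> HF -> R[i]) (iotaH : H -> HF)
  (hHF : is_completion_F n nip1 a ipF iotaH)
  (KG : lmodType R[i]) (ipG : KG -> KG -> R[i]) (iotaK : K -> KG)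
  (hKG : is_completion_F n nip2 b ipG iotaK)
  (T : lmodType R[i]) (ipT : T -> T -> R[i]) (tp : HF -> KG -> T)
  (hT : is_Hilbert_tensor ipF ipG ipT tp)
  (C1 : HF -> HF) (C2 : KG -> KG) (hC1 : is_GB ipF C1) (hC2 : is_GB ipG C2)
  (C12 : T -> T) (hC12 : is_tensor_op ipT tp C1 C2 C12)
  (f e : nat -> H) (g h : nat -> K)
  (hfe : dual_controlled_frames ipF iotaH C1 f e)
  (hgh : dual_controlled_frames ipG iotaK C2 g h) :
  tensor_dual_frame ipF ipG ipT tp C12
    (fun i j => tp (iotaH (f i)) (iotaK (g j)))
    (fun i j => tp (iotaH (e i)) (iotaK (h j))).
Proof.
case: hT => _ tp_linl tp_linr ipT_tp _; case: hC12 => _ C12_tp.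
case: hHF => [[[_ _ ipF_ge0 _] _] _ _ _]; case: hKG => [[[_ _ ipG_ge0 _] _] _ _ _].
case: hfe => frame_f frame_e recon_H; case: hgh => frame_g frame_h recon_K.
split; try exact: tensor_controlled_frame_tp.
move=> u v.
under eq_fun do under eq_fun do
  rewrite ipT_tp C12_tp -scalerA -(linear_opZ (tp_linr _)) -(linear_opZ (tp_linl _)).
exact: dseriesV_to_tp.
Qed.
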